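(* Let $p$ be a prime and $\alpha\in\mathbb{Q}_p$ an algebraic number, and let $(b_n)$ be the sequence of partial quotients produced from $\alpha$ by Algorithm C (defined in the context), after eliminating all zero partial quotients. Then for every $n$ such that $v_p(b_n)<0$, $v_p(b_{n+1})=0$ and $v_p(b_{n+2})=0$, one has $v_p(b_{n+1}b_{n+2}+1)=0$.
   Context: Let $\mathcal{R}=\{-\frac{p-1}{2},\dots,0,\dots,\frac{p-1}{2}\}$ if $p$ is odd, and $\mathcal{R}=\{0,1\}$ if $p=2$. Every nonzero $\alpha\in\mathbb{Q}_p$ is written uniquely as $\alpha=\sum_{n\ge r}a_np^n$ with $r=v_p(\alpha)$, $a_n\in\mathcal{R}$, $a_r\ne0$. Put $s(\alpha)=\sum_{n=r}^{0}a_np^n$, $t(\alpha)=\sum_{n=r}^{-1}a_np^n$ (empty sums are $0$; $s(0)=t(0)=0$). For an algebraic $\alpha\in\mathbb{Q}_p$ whose minimal polynomial over $\mathbb{Q}$ has degree $d$, with trace $\operatorname{Tr}(\alpha)$, and $\operatorname{round}(x)$ the integer nearest to the real $x$, define $\bar s(\alpha)=\operatorname{round}\!\left(\frac{\operatorname{Tr}(\alpha)/d-s(\alpha)}{p}\right)p+s(\alpha)$ and $\bar t(\alpha)=\operatorname{round}\!\left(\operatorname{Tr}(\alpha)/d-t(\alpha)\right)+t(\alpha)$. Algorithm C: set $\alpha_0=\alpha$; for $n\ge0$ let $b_n=\bar s(\alpha_n)$ if $n\equiv0\pmod 3$ and $b_n=\bar t(\alpha_n)$ if $n\equiv1,2\pmod3$;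 if $\alpha_n=b_n$ stop, otherwise set $\alpha_{n+1}=\frac{1}{\alpha_n-b_n}$. Zero partial quotients may occur; they are eliminated from the sequence via $[\dots,b_{n-1},b_n,0,b_{n+1},b_{n+2},\dots]=[\dots,b_{n-1},b_n+b_{n+1},b_{n+2},\dots]$, and the resulting sequence is re-indexed consecutively. *)

(* Q_p is modelled by p-adic Cauchy sequences of rationals
   (an element of Q_p = an equivalence class of such sequences). *)
From mathcomp Require Import all_boot all_order all_algebra.
Set Implicit Arguments. Unset Strict Implicit. Unset Printing Implicit Defensive.
Import Order.TTheory GRing.Theory Num.Theory.
Local Open Scope ring_scope.

(* p-adic valuation of a nonzero rational (value 0 at 0; callers guard q != 0) *)
Definition vp (p : nat) (q : rat) : int :=
  (logn p (absz (numq q)))%:Z - (logn p (absz (denq q)))%:Z.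

Definition ord_ge (p : nat) (k : int) (q : rat) : bool := (q == 0) || (k <= vp p q).

Definition eventually (P : nat -> Prop) : Prop := exists N, forall n, (N <= n)%N -> P n.

Definition cauchy (p : nat) (x : nat -> rat) : Prop :=
  forall k : int, exists N, forall m n, (N <= m)%N -> (N <= n)%N -> ord_ge p k (x m - x n).

Definition null (p : nat) (x : nat -> rat) : Prop :=
  forall k : int, eventually (fun n => ord_ge p k (x n)).

Definition eqp (p : nat) (x y : nat -> rat) : Prop := null p (fun n => x n - y n).

Definition digit (p : nat) (d : int) : bool :=
  if p == 2%N then (0 <= d) && (d <= 1) else (2 * `|d| <= p.-1)%N.

(* sum_{n = lo}^{hi} a_n p^n  (empty if hi < lo) *)
Definition psum (p : nat) (a : int -> int) (lo hi : int) : rat :=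
  let cnt : nat := absz (hi + 1 - lo)%R in
  \sum_(i < cnt | (lo + i%:Z <= hi)%R) (a (lo + i%:Z))%:~R * (p%:R : rat) ^ (lo + i%:Z).

(* x = sum_{n >= r} a_n p^n in Q_p, with a_n in R, a_r <> 0 *)
Definition expansion (p : nat) (x : nat -> rat) (a : int -> int) (r : int) : Prop :=
  a r != 0 /\ (forall n, n < r -> a n = 0) /\ (forall n, digit p (a n)) /\
  forall k : int, exists M0 : int, forall M : int, M0 <= M ->
    eventually (fun n => ord_ge p k (x n - psum p a r M)).

Definition is_s (p : nat) (x : nat -> rat) (q : rat) : Prop :=
  (null p x /\ q = 0) \/ exists a r, expansion p x a r /\ q = psum p a r 0.
Definition is_t (p : nat) (x : nat -> rat) (q : rat) : Prop :=
  (null p x /\ q = 0) \/ exists a r, expansion p x a r /\ q = psum p a r (-1).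

Definition is_minpoly (p : nat) (x : nat -> rat) (P : {poly rat}) : Prop :=
  P \is monic /\ null p (fun n => P.[x n]) /\
  forall Q : {poly rat}, Q != 0 -> null p (fun n => Q.[x n]) -> (size P <= size Q)%N.

(* m = Tr(x)/d, d the degree; Tr(x) = - (coefficient of X^(d-1) in the minimal polynomial) *)
Definition trace_mean (p : nat) (x : nat -> rat) (m : rat) : Prop :=
  exists P, is_minpoly p x P /\ m = - P`_(size P).-2 / ((size P).-1)%:R.

(* nearest integer; ties rounded up *)
Definition round (y : rat) : int := Num.floor (y + 2^-1).

Definition sbar (p : nat) (m s : rat) : rat := (round ((m - s) / p%:R))%:~R * p%:R + s.
Definition tbar (m t : rat) : rat := (round (m - t))%:~R + t.

(* b is the i-th partial quotient computed from alpha_i = y *)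
Definition pq (p : nat) (i : nat) (y : nat -> rat) (b : rat) : Prop :=
  exists m q, trace_mean p y m /\
    if (i %% 3 == 0)%N then is_s p y q /\ b = sbar p m q else is_t p y q /\ b = tbar m q.

(* bs = [b_0; ...; b_(k-1)] is a prefix of the output of Algorithm C on x;
   if [stopped], the algorithm stops after b_(k-1) (alpha_(k-1) = b_(k-1)). *)
Definition AlgC_run (p : nat) (x : nat -> rat) (bs : seq rat) (stopped : bool) : Prop :=
  exists xs : nat -> nat -> rat,
    xs 0%N = x /\
    (forall i, (i < size bs)%N -> pq p i (xs i) (nth 0 bs i)) /\
    (forall i, (i.+1 < size bs)%N ->
        ~ eqp p (xs i) (fun _ => nth 0 bs i) /\
        xs i.+1 = (fun n => (xs i n - nth 0 bs i)^-1)) /\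
    (stopped -> (0 < size bs)%N /\ eqp p (xs (size bs).-1) (fun _ => last 0 bs)).

(* one zero-elimination step: the first 0 at position >= 1 having a successor:
   [.., u, 0, v, ..] -> [.., u + v, ..] *)
Fixpoint elim_step (l : seq rat) : seq rat :=
  match l with
  | u :: l' =>
      match l' with
      | z :: v :: rest => if z == 0 then (u + v) :: rest else u :: elim_step l'
      | _ => l
      end
  | [::] => [::]
  end.

(* elimination of all zero partial quotients (each effective step shortens by 2) *)
Definition elim_zeros (l : seq rat) : seq rat := iter (size l) elim_step l.

(* c is the k-th partial quotient (0-based) of the sequence obtained from the
   output of Algorithm C on x by eliminating zeros: it is the k-th entry of the
   reduced sequence for the complete output (if it stops), or for all
   sufficiently long prefixes (if it does not stop). *)
Definition elim_nth (p : nat) (x : nat -> rat) (k : nat) (c : rat) : Prop :=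
  exists N, forall bs st, AlgC_run p x bs st -> (N <= size bs)%N || st ->
    (k < size (elim_zeros bs))%N /\ nth 0 (elim_zeros bs) k = c.

(* v_p(q) < 0 and v_p(q) = 0 (v_p(0) = +oo) *)
Definition vp_neg (p : nat) (q : rat) : Prop := q != 0 /\ vp p q < 0.
Definition vp_zero (p : nat) (q : rat) : Prop := q != 0 /\ vp p q = 0.

(** Write r_i for the valuation of the complete quotient alpha_i.  Since
   alpha_(i+1) = 1/(alpha_i - b_i), and v(alpha_i - b_i) >= 1 after an s-bar
   step (i = 0 mod 3) and >= 0 after a t-bar step, we get r_(i+1) <= 0,
   strictly after an s-bar step; and b_i has valuation r_i as soon as r_i < 0,
   or r_i <= 0 at an s-bar step.  Reading this modulo 3, two consecutive units
   b_i, b_(i+1) occur only for i = 2 mod 3, where r_i = r_(i+1) = 0 and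
   b_i b_(i+1) + 1 = alpha_i alpha_(i+1) - b_i (alpha_(i+1) - b_(i+1))
   is a unit; and a zero b_(i+1) sits between a b_i of negative valuation and
   an integral b_(i+2).  Both facts survive the merge [u, 0, v] -> [u + v],
   because u + v has negative valuation.
   As the statement quantifies over runs of the algorithm, arbitrarily long
   runs must also exist: every alpha_i has a p-adic expansion (built digit by
   digit from integer approximations) and a minimal polynomial (the reversal
   of the previous one shifted by b_i), so s, t and the trace are defined at
   every step. *)

From Pilot Require Import Defs.
From mathcomp Require Import all_boot all_order all_algebra zify ring lra.
From Stdlib Require Import Classical ClassicalEpsilon Wf_nat.
Import Order.TTheory GRing.Theory Num.Theory.
Local Open Scope ring_scope.

Section AlgorithmC.
Variable p : nat.
Hypothesis p_prime : prime p.
Local Notation pQ := (p%:R : rat).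

(** * The p-adic valuation on Q *)

Definition p_unit (a : int) : bool := ~~ (p %| `|a|)%N.

Definition vp_eq (k : int) (q : rat) : Prop := q != 0 /\ vp p q = k.

Lemma pQ_neq0 : pQ != 0.
Proof. by rewrite pnatr_eq0 -lt0n prime_gt0. Qed.

Lemma pQ_expz_mulN k : pQ ^ k * pQ ^ (- k) = 1.
Proof. by rewrite -expfzDr ?pQ_neq0 // addrN expr0z. Qed.

Lemma p_unit_neq0 {a} : p_unit a -> (a%:~R : rat) != 0.
Proof. by apply: contra; rewrite intr_eq0 => /eqP ->; rewrite dvdn0. Qed.

Lemma p_unitM {a b} : p_unit a -> p_unit b -> p_unit (a * b).
Proof. by rewrite /p_unit abszM Euclid_dvdM // => /negbTE -> /negbTE ->. Qed.

Lemma p_unit1 : p_unit 1.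
Proof. by rewrite /p_unit dvdn1 neq_ltn prime_gt1 ?orbT. Qed.

Lemma p_unit_sign_nat (s : bool) (m : nat) : coprime p m -> p_unit ((-1) ^+ s * m%:Z).
Proof. by rewrite /p_unit abszM absz_sign mul1n -prime_coprime. Qed.

Lemma vp_decomp {q} : q != 0 ->
  exists a b, [/\ p_unit a, p_unit b & q = pQ ^ vp p q * (a%:~R / b%:~R)].
Proof.
move=> q0.
have num_gt0 : (0 < `|numq q|)%N by rewrite absz_gt0 numq_eq0.
have den_gt0 : (0 < `|denq q|)%N by rewrite absz_gt0 denq_eq0.
have [m1 cm1 e1] := pfactor_coprime p_prime num_gt0.
have [m2 cm2 e2] := pfactor_coprime p_prime den_gt0.
exists ((-1) ^+ (numq q < 0)%R * m1%:Z)%R, ((-1) ^+ false * m2%:Z)%R.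
split; [exact: p_unit_sign_nat.. |].
set s := (numq q < 0)%R; set e := logn p `|numq q|; set f := logn p `|denq q|.
have hnum : numq q = (-1) ^+ s * (m1 * p ^ e)%N%:Z by rewrite -e1 -intEsign.
have hden : denq q = (m2 * p ^ f)%N%:Z by rewrite -e2 gez0_abs // ltW // denq_gt0.
have m2_neq0 : (m2%:R : rat) != 0.
  rewrite pnatr_eq0; apply: contraTneq cm2 => ->.
  by rewrite /coprime gcdn0 neq_ltn prime_gt1 ?orbT.
have -> : pQ ^ vp p q = pQ ^+ e / pQ ^+ f by rewrite expfzDr ?pQ_neq0 // exprnN exprnP.
rewrite -[q in LHS]divq_num_den hnum hden !intrM -!pmulrn !natrM !natrX; field.
by rewrite m2_neq0 expf_neq0 ?pQ_neq0.
Qed.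

Lemma unit_decomp_uniq {k v : int} {a b a' b'} :
  p_unit a -> p_unit b -> p_unit a' -> p_unit b' ->
  pQ ^ k * (a%:~R / b%:~R) = pQ ^ v * (a'%:~R / b'%:~R) -> k = v.
Proof.
wlog kv : k v a b a' b' / k <= v.
  move=> hwlog ua ub ua' ub' e; case: (lerP k v) => [kv | /ltW vk].
    exact: hwlog e.
  by apply/esym/(hwlog v k a' b' a b).
move=> ua ub ua' ub'; have [n ->] : exists n : nat, v = k + n%:Z.
  by exists (absz (v - k)); lia.
rewrite expfzDr ?pQ_neq0 // -mulrA => /(mulfI (expfz_neq0 k pQ_neq0)).
have b0 := p_unit_neq0 ub; have b0' := p_unit_neq0 ub'.
move=> /(congr1 (fun y => y * (b%:~R * b'%:~R))).
have -> : a%:~R / b%:~R * (b%:~R * b'%:~R) = (a * b')%:~R :> rat.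
  by rewrite intrM; field.
have -> : pQ ^ n%:Z * (a'%:~R / b'%:~R) * (b%:~R * b'%:~R) = ((p ^ n)%N%:Z * a' * b)%:~R :> rat.
  by rewrite !intrM -pmulrn natrX -exprnP; field.
case: n => [|n]; first by rewrite expn0 mul1r addr0.
move=> /intr_inj /(congr1 absz) /eqP; rewrite !abszM /= => /eqP e.
have : (p %| `|a| * `|b'|)%N by rewrite e !dvdn_mulr // dvdn_exp.
by rewrite Euclid_dvdM // (negbTE ua) (negbTE ub').
Qed.

Lemma vp_unit_decomp k a b : p_unit a -> p_unit b -> vp p (pQ ^ k * (a%:~R / b%:~R)) = k.
Proof.
move=> ua ub; have q0 : pQ ^ k * (a%:~R / b%:~R) != 0.
  by rewrite mulf_neq0 ?expfz_neq0 ?pQ_neq0 // mulf_neq0 ?invr_eq0 ?p_unit_neq0.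
have [a' [b' [ua' ub' e]]] := vp_decomp q0.
exact: esym (unit_decomp_uniq ua ub ua' ub' e).
Qed.

Lemma vp_eqP k q :
  vp_eq k q <-> exists a b, [/\ p_unit a, p_unit b & q = pQ ^ k * (a%:~R / b%:~R)].
Proof.
split=> [[q0 <-] | [a [b [ua ub ->]]]]; first exact: vp_decomp.
split; last exact: vp_unit_decomp.
by rewrite mulf_neq0 ?expfz_neq0 ?pQ_neq0 // mulf_neq0 ?invr_eq0 ?p_unit_neq0.
Qed.

Lemma int_decomp {c : int} : c != 0 -> exists e m, p_unit m /\ c = (p ^ e)%N%:Z * m.
Proof.
move=> c0; have c_gt0 : (0 < `|c|)%N by rewrite absz_gt0.
have [m cm e] := pfactor_coprime p_prime c_gt0.
exists (logn p `|c|), ((-1) ^+ (c < 0)%R * m%:Z); split; first exact: p_unit_sign_nat.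
by move: e; set L := logn p _ => e; rewrite [LHS]intEsign e PoszM; ring.
Qed.

Lemma ord_geP k q :
  ord_ge p k q <-> exists c b, p_unit b /\ q = pQ ^ k * (c%:~R / b%:~R).
Proof.
split.
- rewrite /ord_ge; have [-> _ | q0 /= hk] := eqVneq q 0.
    by exists 0, 1; rewrite mul0r mulr0 p_unit1.
  have [a [b [ua ub e]]] := vp_decomp q0; have [n hn] : exists n : nat, vp p q = k + n%:Z.
    by exists (absz (vp p q - k)); lia.
  exists ((p ^ n)%N%:Z * a), b; split => //.
  by rewrite {1}e hn expfzDr ?pQ_neq0 // intrM -pmulrn natrX exprnP; ring.
- move=> [c [b [ub ->]]]; rewrite /ord_ge.
  have [->|c0] := eqVneq c 0; first by rewrite mul0r mulr0 eqxx.
  have [e [m [um ->]]] := int_decomp c0.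
  have -> : pQ ^ k * (((p ^ e)%N%:Z * m)%:~R / b%:~R) = pQ ^ (k + e%:Z) * (m%:~R / b%:~R).
    by rewrite expfzDr ?pQ_neq0 // intrM -pmulrn natrX exprnP; ring.
  by rewrite vp_unit_decomp // lerDl orbT.
Qed.

Lemma ord_ge0 k : ord_ge p k 0.
Proof. by rewrite /ord_ge eqxx. Qed.

Lemma ord_geD {k x y} : ord_ge p k x -> ord_ge p k y -> ord_ge p k (x + y).
Proof.
move=> /ord_geP [c [b [ub ->]]] /ord_geP [c' [b' [ub' ->]]].
apply/ord_geP; exists (c * b' + c' * b), (b * b'); split; first exact: p_unitM.
have := p_unit_neq0 ub; have := p_unit_neq0 ub' => h1 h2.
by rewrite !intrM intrD !intrM; field; rewrite h1 h2.
Qed.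

Lemma ord_geN {k x} : ord_ge p k x -> ord_ge p k (- x).
Proof.
move=> /ord_geP [c [b [ub ->]]]; apply/ord_geP; exists (- c), b; split => //.
by rewrite intrN; ring.
Qed.

Lemma ord_geB {k x y} : ord_ge p k x -> ord_ge p k y -> ord_ge p k (x - y).
Proof. by move=> hx /ord_geN; apply: ord_geD. Qed.

Lemma ord_geM {k l x y} : ord_ge p k x -> ord_ge p l y -> ord_ge p (k + l) (x * y).
Proof.
move=> /ord_geP [c [b [ub ->]]] /ord_geP [c' [b' [ub' ->]]].
apply/ord_geP; exists (c * c'), (b * b'); split; first exact: p_unitM.
have := p_unit_neq0 ub; have := p_unit_neq0 ub' => h1 h2.
by rewrite expfzDr ?pQ_neq0 // !intrM; field; rewrite h1 h2.
Qed.

Lemma ord_ge_le {k l x} : l <= k -> ord_ge p k x -> ord_ge p l x.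
Proof. by rewrite /ord_ge => lk /orP [-> // | /(le_trans lk) ->]; rewrite orbT. Qed.

Lemma ord_ge_sum k (I : Type) (s : seq I) (Q : pred I) (F : I -> rat) :
  (forall i, Q i -> ord_ge p k (F i)) -> ord_ge p k (\sum_(i <- s | Q i) F i).
Proof.
by move=> h; apply: (big_ind (ord_ge p k)); [exact: ord_ge0 | move=> ? ?; exact: ord_geD |].
Qed.

Lemma ord_ge0_int (z : int) : ord_ge p 0 z%:~R.
Proof. by apply/ord_geP; exists z, 1; rewrite p_unit1 expr0z mul1r divr1. Qed.

Lemma ord_ge_exp k : ord_ge p k (pQ ^ k).
Proof. by apply/ord_geP; exists 1, 1; rewrite p_unit1 divr1 ?mulr1. Qed.

Lemma ord_ge_intM_exp {k j : int} (z : int) : k <= j -> ord_ge p k (z%:~R * pQ ^ j).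
Proof.
by move=> kj; have := ord_geM (ord_ge0_int z) (ord_ge_exp j); rewrite add0r; apply: ord_ge_le.
Qed.

Lemma ord_ge_int_dvdn (z : int) (e : nat) : ord_ge p e%:Z z%:~R -> (p ^ e %| `|z|)%N.
Proof.
rewrite /ord_ge intr_eq0; have [-> _ | z0 /=] := eqVneq z 0; first by rewrite dvdn0.
by rewrite /vp numq_int denq_int /= logn1 subr0 lez_nat pfactor_dvdn // absz_gt0.
Qed.

Lemma vp_eq_neq0 {k q} : vp_eq k q -> q != 0.
Proof. by case. Qed.

Lemma vp_eq_ord_ge {k q} : vp_eq k q -> ord_ge p k q.
Proof. by move=> [_ h]; rewrite /ord_ge h lexx orbT. Qed.

Lemma vp_eq_not_ord_geS {k q} : vp_eq k q -> ~ ord_ge p (k + 1) q.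
Proof. by move=> [q0 h]; rewrite /ord_ge (negbTE q0) h; lia. Qed.

Lemma vp_eq_uniq {r s q} : vp_eq r q -> vp_eq s q -> r = s.
Proof. by move=> [_ <-] [_ <-]. Qed.

Lemma vp_eqDr {k x y} : vp_eq k x -> ord_ge p (k + 1) y -> vp_eq k (x + y).
Proof.
move=> /vp_eqP [a [b [ua ub ->]]] /ord_geP [c [d [ud ->]]].
apply/vp_eqP; exists (a * d + p%:Z * c * b), (b * d); split; last 1 first.
- have := p_unit_neq0 ub; have := p_unit_neq0 ud => h1 h2.
  by rewrite expfzDr ?pQ_neq0 // expr1z !intrM intrD !intrM -pmulrn; field; rewrite h1 h2.
- move: (p_unitM ua ud); apply: contra => pdvd.
  suff : (p%:Z %| a * d)%Z by rewrite dvdzE.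
  have -> : a * d = (a * d + p%:Z * c * b) - p%:Z * c * b by ring.
  by rewrite rpredB ?dvdzE //; apply: dvdz_mulr; apply: dvdz_mulr.
- exact: p_unitM.
Qed.

Lemma vp_eqM {k l x y} : vp_eq k x -> vp_eq l y -> vp_eq (k + l) (x * y).
Proof.
move=> /vp_eqP [a [b [ua ub ->]]] /vp_eqP [a' [b' [ua' ub' ->]]].
apply/vp_eqP; exists (a * a'), (b * b'); split; [exact: p_unitM.. |].
have := p_unit_neq0 ub; have := p_unit_neq0 ub' => h1 h2.
by rewrite expfzDr ?pQ_neq0 // !intrM; field; rewrite h1 h2.
Qed.

Lemma vp_eqV {k x} : vp_eq k x -> vp_eq (- k) x^-1.
Proof.
move=> /vp_eqP [a [b [ua ub ->]]]; apply/vp_eqP; exists b, a; split => //.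
by rewrite -invr_expz invfM invf_div.
Qed.

Lemma vp_eq_exp k : vp_eq k (pQ ^ k).
Proof. by apply/vp_eqP; exists 1, 1; rewrite p_unit1 divr1 ?mulr1. Qed.

Lemma vp_eq_unit {a} : p_unit a -> vp_eq 0 a%:~R.
Proof. by move=> ua; apply/vp_eqP; exists a, 1; rewrite p_unit1 expr0z mul1r divr1. Qed.

Lemma vp_eqX {k x} n : vp_eq k x -> vp_eq (k * n%:Z) (x ^+ n).
Proof.
move=> h; elim: n => [|n IH]; first by rewrite mulr0 expr0; exact: vp_eq_unit p_unit1.
by rewrite exprS (_ : k * n.+1%:Z = k + k * n%:Z); [exact: vp_eqM | lia].
Qed.

(** * p-adic sequences, expansions and partial quotients *)

Lemma eventually_and {A B : nat -> Prop} :
  eventually A -> eventually B -> eventually (fun n => A n /\ B n).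
Proof.
move=> [N1 h1] [N2 h2]; exists (maxn N1 N2) => n.
by rewrite geq_max => /andP [/h1 ? /h2 ?].
Qed.

Lemma eventually_mono {A B : nat -> Prop} :
  (forall n, A n -> B n) -> eventually A -> eventually B.
Proof. by move=> h [N hN]; exists N => n /hN /h. Qed.

Lemma eventually_ex {A : nat -> Prop} : eventually A -> exists n, A n.
Proof. by move=> [N hN]; exists N; apply: hN. Qed.

Definition vp_seq (y : nat -> rat) (r : int) : Prop := eventually (fun n => vp_eq r (y n)).

Lemma vp_seq_uniq {y r s} : vp_seq y r -> vp_seq y s -> r = s.
Proof. by move=> hr hs; have [n [/vp_eq_uniq]] := eventually_ex (eventually_and hr hs); apply. Qed.

Lemma vp_seqV {y r} : vp_seq y r -> vp_seq (fun n => (y n)^-1) (- r).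
Proof. by apply: eventually_mono => n; apply: vp_eqV. Qed.

Lemma vp_seq_ord_ge_le {y r k} :
  vp_seq y r -> eventually (fun n => ord_ge p k (y n)) -> k <= r.
Proof.
move=> h1 h2; have [n [[y0 <-]]] := eventually_ex (eventually_and h1 h2).
by rewrite /ord_ge (negbTE y0).
Qed.

Lemma vp_seq_nonnull {y r} : vp_seq y r -> ~ null p y.
Proof.
move=> h hnull; have [n [hv]] := eventually_ex (eventually_and h (hnull (r + 1))).
exact: vp_eq_not_ord_geS hv.
Qed.

Lemma nonnull_vp_seq {y} : cauchy p y -> ~ null p y -> exists r, vp_seq y r.
Proof.
move=> cy /not_all_ex_not [k /not_ex_all_not hk]; have [N hN] := cy k.
have [n0 [Nn0 yn0]] : exists n0, (N <= n0)%N /\ ~ ord_ge p k (y n0).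
  apply: NNPP => hne; apply: (hk N) => n Nn; apply: NNPP => yn.
  exact: hne (ex_intro _ n (conj Nn yn)).
have y0 : y n0 != 0 by apply: contra_not_neq yn0 => ->; apply: ord_ge0.
have vk : vp p (y n0) < k by move: yn0; rewrite /ord_ge (negbTE y0) /= ltNge => /negP.
exists (vp p (y n0)), N => n Nn; rewrite -(subrK (y n0) (y n)) addrC.
apply: vp_eqDr; first by [].
by apply: ord_ge_le (hN _ _ Nn Nn0); lia.
Qed.

Lemma cauchyBc {y} b : cauchy p y -> cauchy p (fun n => y n - b).
Proof.
move=> cy k; have [N hN] := cy k; exists N => m n hm hn.
by rewrite opprB addrA subrK; exact: hN.
Qed.

Lemma cauchyV {y r} : cauchy p y -> vp_seq y r -> cauchy p (fun n => (y n)^-1).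
Proof.
move=> cy [N2 h2] k; have [N1 h1] := cy (k + r + r).
exists (maxn N1 N2) => m n; rewrite !geq_max => /andP [m1 m2] /andP [n1 n2].
have vm := h2 _ m2; have vn := h2 _ n2.
have -> : (y m)^-1 - (y n)^-1 = (y n - y m) * ((y m)^-1 * (y n)^-1).
  by field; rewrite (vp_eq_neq0 vm) (vp_eq_neq0 vn).
rewrite (_ : k = (k + r + r) + (- r + - r)); last by ring.
exact: ord_geM (h1 _ _ n1 m1) (vp_eq_ord_ge (vp_eqM (vp_eqV vm) (vp_eqV vn))).
Qed.

Lemma vp_seq_inv_sub {y b j} : cauchy p y -> ~ Defs.eqp p y (fun _ => b) ->
  eventually (fun n => ord_ge p j (y n - b)) ->
  exists2 r, j <= r & vp_seq (fun n => (y n - b)^-1) (- r).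
Proof.
move=> cy ne hj; have [r hr] := nonnull_vp_seq (cauchyBc b cy) ne.
by exists r; [exact: vp_seq_ord_ge_le hr hj | exact: vp_seqV].
Qed.

Lemma psum_widen (a : int -> int) (lo hi : int) N : (absz (hi + 1 - lo)%R <= N)%N ->
  psum p a lo hi = \sum_(i < N | lo + i%:Z <= hi) (a (lo + i%:Z))%:~R * pQ ^ (lo + i%:Z).
Proof.
move=> hN; rewrite /psum (big_ord_widen_cond _ (fun i : nat => lo + i%:Z <= hi)
  (fun i : nat => (a (lo + i%:Z))%:~R * pQ ^ (lo + i%:Z)) hN).
by apply: eq_bigl => i /=; case h: (lo + _ <= hi) => //=; apply/idP; lia.
Qed.

Lemma psumB a r {M M'} : M' <= M -> ord_ge p (M' + 1) (psum p a r M - psum p a r M').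
Proof.
move=> hM; set N := maxn (absz (M + 1 - r)%R) (absz (M' + 1 - r)%R).
rewrite (psum_widen a r M N (leq_maxl _ _)) (psum_widen a r M' N (leq_maxr _ _)).
rewrite (bigID (fun i : 'I_N => r + (nat_of_ord i)%:Z <= M')) /=.
rewrite (eq_bigl (fun i : 'I_N => r + (nat_of_ord i)%:Z <= M')); last first.
  by move=> i; case h: (_ <= M'); rewrite ?andbT ?andbF //; apply/idP; lia.
rewrite addrAC subrr add0r; apply: ord_ge_sum => i /andP [_ hi].
by apply: ord_ge_intM_exp; lia.
Qed.

Lemma psum_single a r : psum p a r r = (a r)%:~R * pQ ^ r.
Proof.
by rewrite /psum (_ : absz (r + 1 - r)%R = 1)%N ?big_mkcond ?big_ord1 /= ?addr0 ?lexx //; lia.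
Qed.

Lemma digit_p_unit {d} : digit p d -> d != 0 -> p_unit d.
Proof.
rewrite /digit /p_unit => hd d0; apply/negP => /(dvdn_leq (_ : 0 < `|d|)%N).
have := prime_gt1 p_prime; case: eqP hd => [-> | _] hd; rewrite absz_gt0 d0; lia.
Qed.

Lemma vp_eq_psum a r M : a r != 0 -> digit p (a r) -> r <= M -> vp_eq r (psum p a r M).
Proof.
move=> ar0 dr hM; rewrite -(subrK (psum p a r r) (psum p a r M)) addrC.
apply: vp_eqDr; last exact: psumB.
rewrite psum_single -[r in vp_eq r _]add0r.
exact: vp_eqM (vp_eq_unit (digit_p_unit dr ar0)) (vp_eq_exp r).
Qed.

Lemma expansion_approx {y a r} M : expansion p y a r ->
  eventually (fun n => ord_ge p (M + 1) (y n - psum p a r M)).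
Proof.
move=> [_ [_ [_ happ]]]; have [M0 hM0] := happ (M + 1).
have [M0M1 MM1] : M0 <= (absz M0 + absz M)%N%:Z /\ M <= (absz M0 + absz M)%N%:Z by lia.
apply: eventually_mono (hM0 _ M0M1) => n hn.
rewrite -(subrK (psum p a r (absz M0 + absz M)%N%:Z) (y n)) -addrA.
exact: ord_geD hn (psumB a r MM1).
Qed.

Lemma expansion_vp_seq {y a r} : expansion p y a r -> vp_seq y r.
Proof.
move=> he; have [ar0 [_ [hd _]]] := he.
apply: eventually_mono (expansion_approx r he) => n hn.
by rewrite -(subrK (psum p a r r) (y n)) addrC; apply: vp_eqDr hn; apply: vp_eq_psum.
Qed.

(* [is_s p y] and [is_t p y] are [is_trunc y 0] and [is_trunc y (-1)]. *)
Definition is_trunc (y : nat -> rat) (M : int) (q : rat) : Prop :=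
  (null p y /\ q = 0) \/ exists a r, expansion p y a r /\ q = psum p a r M.

Lemma trunc_approx {y M q c} : is_trunc y M q -> ord_ge p (M + 1) (c - q) ->
  eventually (fun n => ord_ge p (M + 1) (y n - c)).
Proof.
move=> [[hnull ->] | [a [r [he ->]]]] hc.
- by apply: eventually_mono (hnull (M + 1)) => n hy; rewrite -(subr0 c); exact: ord_geB.
- apply: eventually_mono (expansion_approx M he) => n hy.
  have -> : y n - c = (y n - psum p a r M) - (c - psum p a r M) by ring.
  exact: ord_geB.
Qed.

Lemma trunc_vp_eq {y M q c r} : vp_seq y r -> r <= M -> is_trunc y M q ->
  ord_ge p (M + 1) (c - q) -> vp_eq r c.
Proof.
move=> hv rM [[hnull _] | [a [r' [he ->]]]]; first by case: (vp_seq_nonnull hv hnull).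
have r'r := vp_seq_uniq (expansion_vp_seq he) hv; subst r; have [ar0 [_ [hd _]]] := he.
move=> hc; rewrite -(subrK (psum p a r' M) c) addrC.
by apply: vp_eqDr; [exact: vp_eq_psum | apply: ord_ge_le hc; lia].
Qed.

Lemma sbar_sub m s : ord_ge p 1 (sbar p m s - s).
Proof. by rewrite /sbar addrK -[X in _ * X]expr1z; apply: ord_ge_intM_exp. Qed.

Lemma tbar_sub m t : ord_ge p 0 (tbar m t - t).
Proof. by rewrite /tbar addrK; apply: ord_ge0_int. Qed.

Lemma pq_approx_s {i y b} : pq p i y b -> (i %% 3 == 0)%N ->
  eventually (fun n => ord_ge p 1 (y n - b)).
Proof.
move=> [m [q [_ hif]]] i0; rewrite i0 in hif; case: hif => hs ->.
exact: trunc_approx hs (sbar_sub m q).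
Qed.

Lemma pq_approx {i y b} : pq p i y b -> eventually (fun n => ord_ge p 0 (y n - b)).
Proof.
move=> hpq; case i0: (i %% 3 == 0)%N.
  by apply: eventually_mono (pq_approx_s hpq i0) => n; apply: ord_ge_le.
move: hpq => [m [q [_ hif]]]; rewrite i0 in hif; case: hif => ht ->.
by rewrite -(addNr 1); apply: trunc_approx ht _; rewrite addNr; exact: tbar_sub.
Qed.

Lemma pq_vp_eq_s {i y b r} : pq p i y b -> (i %% 3 == 0)%N -> vp_seq y r -> r <= 0 ->
  vp_eq r b.
Proof.
move=> [m [q [_ hif]]] i0 hv r0; rewrite i0 in hif; case: hif => hs ->.
exact: trunc_vp_eq hv r0 hs (sbar_sub m q).
Qed.

Lemma pq_vp_eq {i y b r} : pq p i y b -> vp_seq y r -> r < 0 -> vp_eq r b.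
Proof.
move=> hpq hv r0; case i0: (i %% 3 == 0)%N; first exact: pq_vp_eq_s hpq i0 hv (ltW r0).
move: hpq => [m [q [_ hif]]]; rewrite i0 in hif; case: hif => ht ->.
by apply: trunc_vp_eq hv _ ht _; [lia | rewrite addNr; exact: tbar_sub].
Qed.

(** * Zero elimination *)

Definition unit_pair (a b : rat) : Prop :=
  vp_zero p a -> vp_zero p b -> vp_zero p (a * b + 1).

Definition zero_flanked (a b c : rat) : Prop := b = 0 -> vp_neg p a /\ ord_ge p 0 c.

Fixpoint admissible (l : seq rat) : Prop :=
  if l is a :: l' then
    if l' is b :: l'' then
      [/\ unit_pair a b, (if l'' is c :: _ then zero_flanked a b c else True) & admissible l']
    else True
  else True.

Lemma vp_negD {u v} : vp_neg p u -> ord_ge p 0 v -> vp_neg p (u + v).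
Proof.
move=> [u0 hu] hv; have [] : vp_eq (vp p u) (u + v).
  by apply: vp_eqDr; [by [] | apply: ord_ge_le hv; lia].
by move=> ? e; split; rewrite ?e.
Qed.

Lemma vp_neg_not_zero {u} : vp_neg p u -> ~ vp_zero p u.
Proof. by move=> [_ hu] [_ u0]; move: hu; rewrite u0. Qed.

Lemma elim_step_head {z t} : admissible (z :: t) ->
  exists z' t', elim_step (z :: t) = z' :: t' /\ (z' = z \/ vp_neg p z').
Proof.
case: t => [|v [|w rest]] /=; try by exists z; eexists; split; [reflexivity | left].
case: eqP => [v0 [_ /(_ v0) [zneg wge0] _] | _ _].
  by exists (z + w), rest; split; [| right; exact: vp_negD].
by do 2 eexists; split; [reflexivity | left].
Qed.

Lemma elim_step_cons3 u z v rest : elim_step [:: u, z, v & rest] =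
  if z == 0 then (u + v) :: rest else u :: elim_step [:: z, v & rest].
Proof. by []. Qed.

Lemma admissible_elim_step l : admissible l -> admissible (elim_step l).
Proof.
elim: l => [//|u l IH]; case: l IH => [|z [|v rest]] IH //.
rewrite elim_step_cons3; case: eqP => [z0 | /eqP z0].
- subst z => -[_ /(_ erefl) [uneg vge0] [_ vflank hrest]] {IH}.
  have uvneg := vp_negD uneg vge0.
  case: rest vflank hrest => [|w rest] //= vflank [_ wflank hrest].
  split=> //; first by move=> /(vp_neg_not_zero uvneg).
  case: rest wflank {vflank hrest} => [|c rest] //= wflank w0.
  by split => //; case: (wflank w0).
- move=> [uz _ hzv]; have [z' [t' [e hz']]] := @elim_step_head z [:: v & rest] hzv.
  have := IH hzv; rewrite e /= => ht'; split => //.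
  + by case: hz' => [-> // | /vp_neg_not_zero z'neg _ /z'neg].
  + have z'0 : z' != 0 by case: hz' => [-> | []].
    by case: t' {e ht'} => // c t' /eqP; rewrite (negbTE z'0).
Qed.

Lemma admissible_elim_zeros l : admissible l -> admissible (elim_zeros l).
Proof. by rewrite /elim_zeros; elim: (size l) => //= k IH /IH /admissible_elim_step. Qed.

Lemma admissible_unit_pair l k : admissible l -> (k.+1 < size l)%N ->
  unit_pair (nth 0 l k) (nth 0 l k.+1).
Proof.
elim: l k => [//|a l IH] k; case: l IH => [|b l] IH //= [hab _ hl].
by case: k => [//|k] /= hk; exact: IH.
Qed.

Lemma admissible_of_nth l :
  (forall k, (k.+1 < size l)%N -> unit_pair (nth 0 l k) (nth 0 l k.+1)) ->
  (forall k, (k.+2 < size l)%N -> zero_flanked (nth 0 l k) (nth 0 l k.+1) (nth 0 l k.+2)) ->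
  admissible l.
Proof.
elim: l => [//|a l IH]; case: l IH => [|b l] IH //= h2 h3; split.
- exact: (h2 0%N).
- by case: l h3 {IH h2} => [//|c l] h3; exact: (h3 0%N).
- by apply: IH => k hk; [exact: (h2 k.+1) | exact: (h3 k.+1)].
Qed.

(** * Valuations along a run of Algorithm C *)

Lemma vp_zero_mul_add1 y b c :
  vp_seq y 0 -> vp_seq (fun n => (y n - b)^-1) 0 ->
  eventually (fun n => ord_ge p 1 ((y n - b)^-1 - c)) ->
  vp_zero p b -> vp_zero p (b * c + 1).
Proof.
move=> hy hz hc hb.
have [n [[yn zn] cn]] := eventually_ex (eventually_and (eventually_and hy hz) hc).
have yb0 : y n - b != 0 by apply: contraNneq (vp_eq_neq0 zn) => ->; rewrite invr0.
have -> : b * c + 1 = y n * (y n - b)^-1 - b * ((y n - b)^-1 - c) by field.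
by apply: vp_eqDr (vp_eqM yn zn) _; apply: ord_geN; exact: ord_geM (vp_eq_ord_ge hb) cn.
Qed.

Section Run.
Variables (x : nat -> rat) (bs : seq rat) (xs : nat -> nat -> rat).
Hypothesis cx : cauchy p x.
Hypothesis xs0 : xs 0%N = x.
Hypothesis xs_pq : forall {i}, (i < size bs)%N -> pq p i (xs i) (nth 0 bs i).
Hypothesis xs_next : forall {i}, (i.+1 < size bs)%N ->
  ~ Defs.eqp p (xs i) (fun _ => nth 0 bs i) /\ xs i.+1 = (fun n => (xs i n - nth 0 bs i)^-1).
Local Notation b i := (nth 0 bs i).

Lemma run_cauchy {i} : (i < size bs)%N -> cauchy p (xs i).
Proof.
elim: i => [|i IH] hi; first by rewrite xs0.
have [ne ->] := xs_next hi; have ci := IH (ltnW hi).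
have [r hr] := nonnull_vp_seq (cauchyBc (b i) ci) ne.
exact: cauchyV (cauchyBc _ ci) hr.
Qed.

Lemma run_vp_succ {i} : (i.+1 < size bs)%N ->
  exists r, [/\ vp_seq (xs i.+1) r, r <= 0 & ((i %% 3 == 0)%N -> r < 0)].
Proof.
move=> hi; have [ne ->] := xs_next hi; have ci := run_cauchy (ltnW hi).
have hpq := xs_pq (ltnW hi); case i0: (i %% 3 == 0)%N.
- have [r r_ge1 hr] := vp_seq_inv_sub ci ne (pq_approx_s hpq i0).
  by exists (- r); split => //; lia.
- have [r r_ge0 hr] := vp_seq_inv_sub ci ne (pq_approx hpq).
  by exists (- r); split => //; lia.
Qed.

Lemma run_quotient_neg {i} : (0 < i < size bs)%N -> (i %% 3 == 1)%N -> vp_neg p (b i).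
Proof.
case: i => [//|i] /= hi i1; have [r [hr _ r0]] := run_vp_succ hi.
have r_neg : r < 0 by apply: r0; lia.
by have [b0 e] := pq_vp_eq (xs_pq hi) hr r_neg; split; rewrite ?e.
Qed.

Lemma run_vp_seq0 {i} : (0 < i < size bs)%N -> ~ vp_neg p (b i) -> vp_seq (xs i) 0.
Proof.
case: i => [//|i] /= hi bneg; have [r [hr r_le0 _]] := run_vp_succ hi.
suff r0 : r = 0 by rewrite -r0.
apply/eqP; rewrite eq_le r_le0 /= leNgt; apply/negP => r_neg.
by have [? e] := pq_vp_eq (xs_pq hi) hr r_neg; apply: bneg; split; rewrite ?e.
Qed.

Lemma run_quotient_s_neq0 {i} : (0 < i < size bs)%N -> (i %% 3 == 0)%N -> b i != 0.
Proof.
case: i => [//|i] /= hi i0; have [r [hr r_le0 _]] := run_vp_succ hi.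
exact: vp_eq_neq0 (pq_vp_eq_s (xs_pq hi) i0 hr r_le0).
Qed.

Lemma run_unit_pair k : (k.+1 < size bs)%N -> unit_pair (b k) (b k.+1).
Proof.
move=> hk; have := ltn_pmod k (isT : 0 < 3)%N.
case k3: (k %% 3)%N => [|[|[|//]]] _.
- have bneg : vp_neg p (b k.+1) by apply: run_quotient_neg; lia.
  by move=> _ /(vp_neg_not_zero bneg).
- have bneg : vp_neg p (b k) by apply: run_quotient_neg; lia.
  by move=> /(vp_neg_not_zero bneg).
- move=> hb hb'; have [_ xs_succ] := xs_next hk.
  have hy : vp_seq (xs k) 0 by apply: run_vp_seq0 => [| /vp_neg_not_zero]; [lia | exact].
  have hz : vp_seq (xs k.+1) 0 by apply: run_vp_seq0 => [| /vp_neg_not_zero]; [lia | exact].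
  have k1_0 : (k.+1 %% 3 == 0)%N by lia.
  have hc := pq_approx_s (xs_pq hk) k1_0; rewrite xs_succ in hz hc.
  exact: vp_zero_mul_add1 hy hz hc hb.
Qed.

Lemma run_zero_flanked k : (k.+2 < size bs)%N -> zero_flanked (b k) (b k.+1) (b k.+2).
Proof.
move=> hk; have hk1 := ltnW hk; have := ltn_pmod k (isT : 0 < 3)%N.
case k3: (k %% 3)%N => [|[|[|//]]] _ b0.
- have [bk1_neq0 _] : vp_neg p (b k.+1) by apply: run_quotient_neg; lia.
  by rewrite b0 eqxx in bk1_neq0.
- split; first by apply: run_quotient_neg; lia.
  have hy : vp_seq (xs k.+1) 0 by apply: run_vp_seq0; [lia | rewrite b0 => -[/eqP]].
  have [_ xs_succ] := xs_next hk; rewrite b0 in xs_succ.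
  have hz : vp_seq (xs k.+2) 0.
    rewrite xs_succ -[X in vp_seq _ X]oppr0; apply: (vp_seqV (y := fun n => xs k.+1 n - 0)).
    by apply: eventually_mono hy => n; rewrite subr0.
  by apply/vp_eq_ord_ge/(pq_vp_eq_s (xs_pq hk) _ hz) => //; lia.
- have : b k.+1 != 0 by apply: run_quotient_s_neq0; lia.
  by rewrite b0 eqxx.
Qed.

Lemma run_admissible : admissible bs.
Proof. exact: admissible_of_nth run_unit_pair run_zero_flanked. Qed.

End Run.

(** * Existence of expansions and of runs *)

Lemma ord_ge0_approx_int {q} (K : nat) :
  ord_ge p 0 q -> exists z : int, ord_ge p K%:Z (q - z%:~R).
Proof.
move=> /ord_geP [c [d [ud ->]]]; have d0 := p_unit_neq0 ud.
have [u [v e]] := Bezoutz d (p ^ K)%N%:Z.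
have g1 : gcdz d (p ^ K)%N%:Z = 1%N.
  by apply/eqP/coprimeXr; rewrite coprime_sym prime_coprime.
rewrite g1 in e.
have bezout : 1 - u%:~R * d%:~R = v%:~R * pQ ^+ K :> rat.
  have := congr1 (intmul (1 : rat)) e; rewrite intrD !intrM -pmulrn natrX; lra.
exists (c * u); apply/ord_geP; exists (c * v), d; split => //.
rewrite expr0z mul1r (_ : pQ ^ K%:Z = pQ ^+ K) // !intrM.
transitivity (c%:~R / d%:~R * (1 - u%:~R * d%:~R) : rat); first by field.
by rewrite bezout; field.
Qed.

Definition low_digit (w : int) : int :=
  if p == 2%N then (w %% 2)%Z
  else let d := (w %% p%:Z)%Z in if 2 * d <= p%:Z - 1 then d else d - p%:Z.

Definition drop_digit (w : int) : int := ((w - low_digit w) %/ p%:Z)%Z.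

Fixpoint nth_digit (j : nat) (w : int) : int :=
  if j is j'.+1 then nth_digit j' (drop_digit w) else low_digit w.

Fixpoint drop_digits (K : nat) (w : int) : int :=
  if K is K'.+1 then drop_digits K' (drop_digit w) else w.

Lemma low_digit_digit w : digit p (low_digit w).
Proof.
have p_gt0 : 0 < p%:Z by rewrite ltz_nat prime_gt0.
rewrite /digit /low_digit; case: eqP => [p2 | p_neq2].
  by have := modz_ge0 w (isT : (2 : int) != 0); have := ltz_pmod w (isT : (0 : int) < 2); lia.
have := modz_ge0 w (lt0r_neq0 p_gt0); have := ltz_pmod w p_gt0.
have [k ->] : exists k, p = k.*2.+1.
  have [p2 | p_odd] := even_prime p_prime; first by case: p_neq2.
  by exists p./2; rewrite -[LHS]odd_double_half p_odd.
by move: (w %% _)%Z => d; case: ifP; lia.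
Qed.

Lemma low_digit_dvd w : (p%:Z %| w - low_digit w)%Z.
Proof.
rewrite /low_digit; case: eqP => [-> | _]; first by rewrite -eqz_mod_dvd modz_mod.
case: ifP => _; first by rewrite -eqz_mod_dvd modz_mod.
have -> : w - ((w %% p%:Z)%Z - p%:Z) = ((w %/ p%:Z)%Z + 1) * p%:Z.
  by rewrite {1}(divz_eq w p%:Z); ring.
exact: dvdz_mull.
Qed.

Lemma low_digit_eqmod {w w'} : (p%:Z %| w - w')%Z -> low_digit w = low_digit w'.
Proof.
rewrite -eqz_mod_dvd => /eqP e; rewrite /low_digit; case: eqP => [p2 | _]; last by rewrite e.
by move: e; rewrite p2.
Qed.

Lemma low_digit_neq0 w : p_unit w -> low_digit w != 0.
Proof.
apply: contraL => /eqP w0; have := low_digit_dvd w; rewrite w0 subr0 dvdzE.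
by rewrite /p_unit negbK.
Qed.

Lemma drop_digitE w : w = low_digit w + drop_digit w * p%:Z.
Proof. by rewrite /drop_digit divzK ?low_digit_dvd // addrC subrK. Qed.

Lemma nth_digit_digit j w : digit p (nth_digit j w).
Proof. by elim: j w => [|j IH] w /=; [exact: low_digit_digit | exact: IH]. Qed.

Lemma int_digits K w : (w%:~R : rat) =
  \sum_(j < K) (nth_digit j w)%:~R * pQ ^+ j + (drop_digits K w)%:~R * pQ ^+ K.
Proof.
elim: K w => [|K IH] w; first by rewrite big_ord0 expr0 mulr1 add0r.
rewrite big_ord_recl /= expr0 mulr1.
have -> : \sum_(i < K) (nth_digit (bump 0 i) w)%:~R * pQ ^+ bump 0 i =
    pQ * \sum_(i < K) (nth_digit i (drop_digit w))%:~R * pQ ^+ i.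
  by rewrite mulr_sumr; apply: eq_bigr => i _; rewrite /bump /= add1n exprS; ring.
by rewrite {1}(drop_digitE w) intrD intrM -pmulrn (IH (drop_digit w)) exprS; ring.
Qed.

Lemma nth_digit_eqmod j w w' : ((p%:Z) ^+ j.+1 %| w - w')%Z -> nth_digit j w = nth_digit j w'.
Proof.
elim: j w w' => [|j IH] w w' h; first by apply: low_digit_eqmod; rewrite expr1 in h.
have hp : (p%:Z %| w - w')%Z by apply: dvdz_trans h; rewrite exprS dvdz_mulr.
apply: IH; have p0 : p%:Z != 0 by rewrite eqz_nat -lt0n prime_gt0.
rewrite -(dvdz_mul2r p0) -exprSr.
have -> : (drop_digit w - drop_digit w') * p%:Z = w - w'.
  by rewrite [in RHS](drop_digitE w) [in RHS](drop_digitE w') (low_digit_eqmod hp); ring.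
exact: h.
Qed.

Section ExpansionExists.
Variables (y : nat -> rat) (r : int).
Hypothesis y_cauchy : cauchy p y.
Hypothesis y_vp : vp_seq y r.

Lemma int_trunc_exists K : exists z : int,
  eventually (fun n => ord_ge p (r + K%:Z) (y n - pQ ^ r * z%:~R)).
Proof.
have [N1 h1] := y_cauchy (r + K%:Z); have [N2 h2] := y_vp; set n0 := maxn N1 N2.
have y0_unit : ord_ge p 0 (y n0 * pQ ^ (- r)).
  by have := vp_eq_ord_ge (vp_eqM (h2 n0 (leq_maxr _ _)) (vp_eq_exp (- r))); rewrite addrN.
have [z hz] := ord_ge0_approx_int K y0_unit.
exists z, N1 => n hn.
have -> : y n - pQ ^ r * z%:~R = (y n - y n0) + pQ ^ r * (y n0 * pQ ^ (- r) - z%:~R).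
  by rewrite mulrBr mulrCA pQ_expz_mulN mulr1 addrA subrK.
by apply: ord_geD (h1 n n0 hn (leq_maxl _ _)) _; exact: ord_geM (ord_ge_exp r) hz.
Qed.

Definition int_trunc (K : nat) : int :=
  proj1_sig (constructive_indefinite_description _ (int_trunc_exists K)).

Lemma int_truncP K :
  eventually (fun n => ord_ge p (r + K%:Z) (y n - pQ ^ r * (int_trunc K)%:~R)).
Proof. by rewrite /int_trunc; case: constructive_indefinite_description. Qed.

Lemma nth_digit_int_trunc {j K} : (j < K)%N ->
  nth_digit j (int_trunc j.+1) = nth_digit j (int_trunc K).
Proof.
move=> jK; apply: nth_digit_eqmod; rewrite dvdzE abszX /=; apply: ord_ge_int_dvdn.
have [n [h1 h2]] := eventually_ex (eventually_and (int_truncP j.+1) (int_truncP K)).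
have : ord_ge p (r + j.+1%:Z) (pQ ^ r * (int_trunc j.+1 - int_trunc K)%:~R).
  have -> : pQ ^ r * (int_trunc j.+1 - int_trunc K)%:~R =
      (y n - pQ ^ r * (int_trunc K)%:~R) - (y n - pQ ^ r * (int_trunc j.+1)%:~R).
    by rewrite intrB; ring.
  by apply: ord_geB h1; apply: ord_ge_le h2; lia.
move=> /(ord_geM (ord_ge_exp (- r))); rewrite mulrA [pQ ^ (- r) * _]mulrC pQ_expz_mulN mul1r.
by apply: ord_ge_le; lia.
Qed.

Definition padic_digit (n : int) : int :=
  if r <= n then nth_digit (absz (n - r)) (int_trunc (absz (n - r)).+1) else 0.

Lemma padic_digit_lead : padic_digit r != 0.
Proof.
rewrite /padic_digit lexx subrr /=; apply: low_digit_neq0; apply/negP => pdvd.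
have [t ht] : exists t, int_trunc 1 = t * p%:Z by apply/dvdzP; rewrite dvdzE.
have [n [yn hn]] := eventually_ex (eventually_and y_vp (int_truncP 1)).
apply: (vp_eq_not_ord_geS yn).
have -> : y n = (y n - pQ ^ r * (int_trunc 1)%:~R) + (int_trunc 1)%:~R * pQ ^ r by ring.
apply: ord_geD hn _; rewrite ht intrM -pmulrn.
have -> : t%:~R * pQ * pQ ^ r = t%:~R * pQ ^ (r + 1) by rewrite expfzDr ?pQ_neq0 // expr1z; ring.
exact: ord_ge_intM_exp.
Qed.

Lemma psum_padic_digit M : r <= M + 1 ->
  psum p padic_digit r M =
  pQ ^ r * \sum_(i < absz (M + 1 - r)%R)
    (nth_digit i (int_trunc (absz (M + 1 - r)%R)))%:~R * pQ ^+ i.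
Proof.
move=> rM; rewrite (psum_widen _ _ _ _ (leqnn _)) big_mkcond mulr_sumr.
apply: eq_bigr => i _; have iK := ltn_ord i.
rewrite (_ : r + (nat_of_ord i)%:Z <= M); last by lia.
rewrite /padic_digit (_ : r <= r + (nat_of_ord i)%:Z); last by lia.
rewrite (_ : absz (r + (nat_of_ord i)%:Z - r)%R = nat_of_ord i); last by lia.
by rewrite (nth_digit_int_trunc iK) expfzDr ?pQ_neq0 // -exprnP; ring.
Qed.

Lemma expansion_padic_digit : expansion p y padic_digit r.
Proof.
split; [exact: padic_digit_lead | split; [| split]].
- by move=> n hn; rewrite /padic_digit; case: ifP => // h; lia.
- move=> n; rewrite /padic_digit; case: ifP => _; first exact: nth_digit_digit.
  by rewrite /digit; case: eqP.
move=> k; exists ((absz k + absz r)%N%:Z) => M hM; set K := absz (M + 1 - r)%R.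
have hK : M + 1 = r + K%:Z by rewrite /K; lia.
apply: eventually_mono (int_truncP K) => n hn.
have -> : y n - psum p padic_digit r M =
    (y n - pQ ^ r * (int_trunc K)%:~R) + (drop_digits K (int_trunc K))%:~R * pQ ^ (r + K%:Z).
  rewrite psum_padic_digit; last by lia.
  by rewrite {1}(int_digits K (int_trunc K)) expfzDr ?pQ_neq0 // -exprnP; ring.
by apply: ord_ge_le (_ : k <= r + K%:Z) _; [lia | exact: ord_geD hn (ord_ge_intM_exp _ (lexx _))].
Qed.
End ExpansionExists.

Lemma vp_seq_expansion {y r} : cauchy p y -> vp_seq y r -> exists a, expansion p y a r.
Proof. by move=> cy hv; eexists; exact: expansion_padic_digit cy hv. Qed.

Definition annihilates (P : {poly rat}) (y : nat -> rat) : Prop := null p (fun n => P.[y n]).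

Lemma annihilatesZ c P y : c != 0 -> annihilates P y -> annihilates (c *: P) y.
Proof.
move=> c0 h k; apply: eventually_mono (h (k - vp p c)) => n hn; rewrite hornerZ.
by have := ord_geM (vp_eq_ord_ge (conj c0 erefl : vp_eq (vp p c) c)) hn; apply: ord_ge_le; lia.
Qed.

Lemma classical_least (P : nat -> Prop) {n} : P n -> exists m, P m /\ forall k, P k -> (m <= k)%N.
Proof.
move=> Pn; have [m [[Pm mmin] _]] :=
  dec_inh_nat_subset_has_unique_least_element P (fun k => classic (P k)) (ex_intro _ n Pn).
by exists m; split=> // k /mmin /ssrnat.leP.
Qed.

Lemma minpoly_exists y : (exists2 Q, Q != 0 & annihilates Q y) -> exists P, is_minpoly p y P.
Proof.
move=> [Q Q0 hQ].
have [d [[P [P0 hP <-]] Pmin]] := classical_least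
  (fun d => exists P, [/\ P != 0, annihilates P y & size P = d]) (ex_intro _ Q (And3 Q0 hQ erefl)).
have lc0 : lead_coef P != 0 by rewrite lead_coef_eq0.
exists ((lead_coef P)^-1 *: P); split; [| split].
- by rewrite monicE lead_coefZ mulVf.
- by apply: annihilatesZ; rewrite ?invr_eq0.
- by move=> R R0 hR; rewrite size_scale ?invr_eq0 //; apply: Pmin; exists R.
Qed.

Lemma annihilates_inv_sub P y b r : P != 0 -> annihilates P y ->
  vp_seq (fun n => y n - b) r -> exists2 Q, Q != 0 & annihilates Q (fun n => (y n - b)^-1).
Proof.
move=> P0 hP hv; set d := (size P).-1.
have sP : size P = d.+1 by rewrite /d prednK // size_poly_gt0.
pose Q : {poly rat} := \sum_(i < size P) P`_i *: ((b%:P * 'X + 1) ^+ i * 'X ^+ (d - i)).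
have hQ z : z != 0 -> Q.[z] = z ^+ d * P.[b + z^-1].
  move=> z0; rewrite /Q horner_sum horner_coef mulr_sumr; apply: eq_bigr => i _.
  have hi : (i <= d)%N by rewrite -ltnS -sP.
  rewrite !hornerE -{2}(subnKC hi) exprD (_ : b * z + 1 = z * (b + z^-1)); last by field.
  by rewrite exprMn /=; ring.
exists Q.
- have Q0 : Q.[0] = lead_coef P.
    rewrite /Q horner_sum sP big_ord_recr /= big1 ?add0r => [|i _].
      by rewrite !hornerE subnn expr0 expr1n /= !mulr1 lead_coefE sP.
    by rewrite !hornerE expr0n (_ : (d - i == 0)%N = false) /= ?mulr0 //; have := ltn_ord i; lia.
  by apply: contraNneq P0 => Qe; rewrite -lead_coef_eq0 -Q0 Qe horner0.
- move=> k; apply: eventually_mono (eventually_and (vp_seqV hv) (hP (k + r * d%:Z))) => n [zn Pn].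
  rewrite hQ ?(vp_eq_neq0 zn) // invrK (addrC b) subrK.
  have := ord_geM (vp_eq_ord_ge (vp_eqX d zn)) Pn.
  by apply: ord_ge_le; rewrite (_ : - r * d%:Z + (k + r * d%:Z) = k) //; ring.
Qed.

Lemma minpoly_inv_sub y b : cauchy p y -> (exists P, is_minpoly p y P) ->
  ~ Defs.eqp p y (fun _ => b) -> exists P, is_minpoly p (fun n => (y n - b)^-1) P.
Proof.
move=> cy [P [Pmonic [hP _]]] ne; have [r hr] := nonnull_vp_seq (cauchyBc b cy) ne.
by apply: minpoly_exists; apply: annihilates_inv_sub hP hr; exact: monic_neq0.
Qed.

Lemma pq_exists i y : cauchy p y -> (exists P, is_minpoly p y P) -> exists b, pq p i y b.
Proof.
move=> cy [P hP]; set m := - P`_(size P).-2 / ((size P).-1)%:R.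
have hm : trace_mean p y m by exists P.
have [qs [qt [hs ht]]] : exists qs qt, is_s p y qs /\ is_t p y qt.
  have [hnull | /(nonnull_vp_seq cy) [r hr]] := classic (null p y).
    by exists 0, 0; split; left.
  have [a ha] := vp_seq_expansion cy hr.
  by exists (psum p a r 0), (psum p a r (-1)); split; right; exists a, r.
case i0: (i %% 3 == 0)%N.
- by exists (sbar p m qs), m, qs; rewrite i0.
- by exists (tbar m qt), m, qt; rewrite i0.
Qed.

Section RunExists.
Variable x : nat -> rat.
Hypothesis x_cauchy : cauchy p x.
Hypothesis x_algebraic : exists P, is_minpoly p x P.

Definition choose_pq (i : nat) (y : nat -> rat) : rat := epsilon (inhabits 0) (pq p i y).

Fixpoint complete_quot (i : nat) : nat -> rat :=
  if i is i'.+1 then fun n => (complete_quot i' n - choose_pq i' (complete_quot i'))^-1 else x.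

Local Notation b i := (choose_pq i (complete_quot i)).

Definition continues (i : nat) : Prop := ~ Defs.eqp p (complete_quot i) (fun _ => b i).

Lemma complete_quot_spec i : (forall j, (j < i)%N -> continues j) ->
  cauchy p (complete_quot i) /\ exists P, is_minpoly p (complete_quot i) P.
Proof.
elim: i => [|i IH] hi //; have [ci mi] := IH (fun j ji => hi j (ltnW ji)).
have ne := hi i (ltnSn i); have [r hr] := nonnull_vp_seq (cauchyBc (b i) ci) ne.
by split; [exact: cauchyV (cauchyBc _ ci) hr | exact: minpoly_inv_sub].
Qed.

Lemma complete_quot_pq i : (forall j, (j < i)%N -> continues j) -> pq p i (complete_quot i) (b i).
Proof.
move=> /complete_quot_spec [ci mi]; rewrite /choose_pq; apply: epsilon_spec; exact: pq_exists.
Qed.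

Lemma complete_quot_run k (st : bool) : (forall j, (j.+1 < k)%N -> continues j) ->
  (st -> (0 < k)%N /\ ~ continues k.-1) -> AlgC_run p x (mkseq (fun i => b i) k) st.
Proof.
move=> hk hst; exists complete_quot; rewrite size_mkseq; split; [by [] | split; [| split]].
- by move=> i ik; rewrite nth_mkseq //; apply: complete_quot_pq => j ji; apply: hk; lia.
- by move=> i ik; rewrite nth_mkseq; [split => //; exact: hk | lia].
- move=> /hst [k0 stop]; split => //; rewrite -nth_last size_mkseq nth_mkseq; last by lia.
  by apply: NNPP.
Qed.

Lemma run_exists L : exists bs st, AlgC_run p x bs st /\ (L <= size bs)%N || st.
Proof.
have [hL | /not_all_ex_not [j /not_imply_elim2 nj]] :=
  classic (forall j, (j.+1 < L)%N -> continues j).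
  exists (mkseq (fun i => b i) L), false; rewrite size_mkseq leqnn.
  by split => //; exact: complete_quot_run.
have [m [nm mmin]] := classical_least (fun j => ~ continues j) nj.
exists (mkseq (fun i => b i) m.+1), true; rewrite orbT; split => //.
apply: complete_quot_run => // i im; apply: NNPP => ni; have := mmin _ ni; lia.
Qed.
End RunExists.
End AlgorithmC.

Theorem proposition4 (p : nat) (x : nat -> rat) :
  prime p -> cauchy p x -> (exists P, is_minpoly p x P) ->
  forall (n : nat) (c0 c1 c2 : rat),
    elim_nth p x n c0 -> elim_nth p x n.+1 c1 -> elim_nth p x n.+2 c2 ->
    vp_neg p c0 -> vp_zero p c1 -> vp_zero p c2 ->
    vp_zero p (c1 * c2 + 1).
Proof.
move=> p_prime cx hmx n c0 c1 c2 _ [N1 h1] [N2 h2] _ hc1 hc2.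
have [bs [st [hrun long]]] := run_exists _ p_prime _ cx hmx (maxn N1 N2).
have reaches N : (N <= maxn N1 N2)%N -> (N <= size bs)%N || st.
  by move=> NN; case/orP: long => [/(leq_trans NN) -> | ->]; rewrite ?orbT.
have [_ e1] := h1 _ _ hrun (reaches _ (leq_maxl _ _)).
have [n2_lt e2] := h2 _ _ hrun (reaches _ (leq_maxr _ _)); subst c1 c2.
have [xs [xs0 [xs_pq [xs_next _]]]] := hrun.
have bs_adm := run_admissible _ p_prime _ _ _ cx xs0 xs_pq xs_next.
exact: admissible_unit_pair _ _ _ (admissible_elim_zeros _ p_prime _ bs_adm) n2_lt hc1 hc2.
Qed.
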